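(* For every $n\ge 7$, the graph $G_n$ is not an IP-SEG* graph.
   Context: Let $L_1$ and $L_2$ be two distinct parallel horizontal lines in the plane. A closed straight line segment is an interval segment if both of its endpoints lie on the same line $L_i$, and a permutation segment if one endpoint lies on $L_1$ and the other on $L_2$. An IP-SEG model is a finite family of interval and permutation segments; its intersection graph has one vertex per segment, adjacent iff the segments intersect. An IP-SEG* model is an IP-SEG model in which all interval segments lie on the same line $L_i$; a graph is an IP-SEG* graph if it is isomorphic to the intersection graph of an IP-SEG* model. For $n\ge 3$, $G_n$ is the graph on $3n$ vertices $v_1,\dots,v_n,w_1,\dots,w_n,z_1,\dots,z_n$ whose edges are $v_iv_{i+1}$ (indices mod $n$), $v_iw_i$ and $w_iz_i$ for $1\le i\le n$, and no others (a chordless cycle with a pendant path of length $2$ attached at each cycle vertex). *)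

From Stdlib Require Import Reals Arith.
Open Scope R_scope.

Definition point : Type := (R * R)%type.
Definition segment : Type := (point * point)%type.

Definition on_hline (h : R) (p : point) : Prop := snd p = h.

Definition in_segment (s : segment) (x : point) : Prop :=
  exists t : R, 0 <= t <= 1 /\
    fst x = (1 - t) * fst (fst s) + t * fst (snd s) /\
    snd x = (1 - t) * snd (fst s) + t * snd (snd s).

Definition segs_intersect (s1 s2 : segment) : Prop :=
  exists x : point, in_segment s1 x /\ in_segment s2 x.

Definition interval_seg_on (h : R) (s : segment) : Prop :=
  on_hline h (fst s) /\ on_hline h (snd s).

Definition interval_seg (h1 h2 : R) (s : segment) : Prop :=
  interval_seg_on h1 s \/ interval_seg_on h2 s.

Definition permutation_seg (h1 h2 : R) (s : segment) : Prop :=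
  (on_hline h1 (fst s) /\ on_hline h2 (snd s)) \/
  (on_hline h2 (fst s) /\ on_hline h1 (snd s)).

Definition IP_SEG_star_graph (h1 h2 : R) (V : Type) (D : V -> Prop)
    (adj : V -> V -> Prop) : Prop :=
  exists f : V -> segment,
    (forall x, D x -> interval_seg h1 h2 (f x) \/ permutation_seg h1 h2 (f x)) /\
    (exists h, (h = h1 \/ h = h2) /\
       forall x, D x -> interval_seg h1 h2 (f x) -> interval_seg_on h (f x)) /\
    (forall x y, D x -> D y -> x <> y -> (adj x y <-> segs_intersect (f x) (f y))).

(* Vertices of G_n: v_i, w_i, z_i for 0 <= i < n (0-based indices). *)
Inductive Gvtx : Type := Vv (i : nat) | Wv (i : nat) | Zv (i : nat).

Definition Gvalid (n : nat) (x : Gvtx) : Prop :=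
  match x with Vv i | Wv i | Zv i => (i < n)%nat end.

Definition Gadj (n : nat) (x y : Gvtx) : Prop :=
  match x, y with
  | Vv i, Vv j => j = Nat.modulo (i + 1) n \/ i = Nat.modulo (j + 1) n
  | Vv i, Wv j | Wv j, Vv i => i = j
  | Wv i, Zv j | Zv j, Wv i => i = j
  | _, _ => False
  end.

From Stdlib Require Import Reals Lia Lra Psatz.
Open Scope R_scope.

(* Let y = h be the line carrying all interval segments and
   y = h' the other line.  Every segment of the model is recorded by its
   [shape]: an interval [l, r] on the line y = h, or a permutation segment with
   foot a on y = h and foot b on y = h'; two segments meet iff their shapes
   satisfy an explicit inequality ([meets]).  A permutation segment P splits
   the strip: a shape missing P lies entirely to its left or to its right, and
   this side propagates along paths avoiding P.  In G_n the vertices far from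
   a vertex x (the bulk of the cycle minus N[x], with its pendant paths) form a
   connected set, so a permutation vertex x sees all of them on one side c.
   Two mutually far permutation vertices cannot see each other on the same
   side.  Now if at least five cycle vertices are permutation segments, three
   of them share a side, so they are pairwise cycle-adjacent: impossible.
   Otherwise at least three cycle vertices are intervals; each of them yields,
   injectively, an index j whose pendant path contains a permutation segment,
   and two of these three pendant segments share a side: impossible. *)

(* Shapes: [Ival l r] is the segment [l, r] x {h}; [Perm a b] joins (a, h)
   to (b, h'). *)
Inductive shape : Type := Ival (l r : R) | Perm (a b : R).

Definition shape_ok (D : shape) : Prop :=
  match D with Ival l r => l <= r | Perm _ _ => True end.

Definition is_perm (D : shape) : bool :=
  match D with Perm _ _ => true | Ival _ _ => false end.

(* Intersection of shapes; two permutation segments cross iff their feet are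
   in opposite (weak) order on the two lines. *)
Definition meets (D E : shape) : Prop :=
  match D, E with
  | Ival l1 r1, Ival l2 r2 => l1 <= r2 /\ l2 <= r1
  | Ival l r, Perm a _ | Perm a _, Ival l r => l <= a <= r
  | Perm a1 b1, Perm a2 b2 => (a1 - a2) * (b1 - b2) <= 0
  end.

Definition shape_points (h h' : R) (D : shape) (p : point) : Prop :=
  match D with
  | Ival l r => snd p = h /\ l <= fst p <= r
  | Perm a b => exists t, 0 <= t <= 1 /\
      fst p = (1 - t) * a + t * b /\ snd p = (1 - t) * h + t * h'
  end.

Definition represents (h h' : R) (s : segment) (D : shape) : Prop :=
  shape_ok D /\ forall p, in_segment s p <-> shape_points h h' D p.

Lemma convex_point x1 x x2 : x1 <= x <= x2 ->
  exists t, 0 <= t <= 1 /\ x = (1 - t) * x1 + t * x2.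
Proof.
  intros [H1 H2]. destruct (Req_dec x1 x2) as [E|E].
  - exists 0. split; [lra|]. subst. lra.
  - set (t := (x - x1) / (x2 - x1)).
    assert (Et : t * (x2 - x1) = x - x1) by (unfold t; field; lra).
    exists t. split; [split; nra | nra].
Qed.

Lemma convex_point_minmax x1 x x2 : Rmin x1 x2 <= x <= Rmax x1 x2 ->
  exists t, 0 <= t <= 1 /\ x = (1 - t) * x1 + t * x2.
Proof.
  unfold Rmin, Rmax; destruct (Rle_dec x1 x2); intros H.
  - apply convex_point; lra.
  - destruct (convex_point x2 x x1) as [t [Ht E]]; [lra|].
    exists (1 - t). split; [lra|]. rewrite E; ring.
Qed.

Lemma zero_between x y :
  (exists t, 0 <= t <= 1 /\ (1 - t) * x + t * y = 0) <-> x * y <= 0.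
Proof.
  split.
  - intros [t [Ht E]].
    assert (E1 : t * (x * y) = - ((1 - t) * (x * x))).
    { replace (t * (x * y)) with (x * (t * y)) by ring.
      replace (t * y) with (- ((1 - t) * x)) by lra. ring. }
    assert (E2 : (1 - t) * (x * y) = - (t * (y * y))).
    { replace ((1 - t) * (x * y)) with (y * ((1 - t) * x)) by ring.
      replace ((1 - t) * x) with (- (t * y)) by lra. ring. }
    assert (0 <= t * (y * y)) by (apply Rmult_le_pos; [lra | apply Rle_0_sqr]).
    assert (0 <= (1 - t) * (x * x)) by (apply Rmult_le_pos; [lra | apply Rle_0_sqr]).
    lra.
  - intros H. destruct (Rle_dec x 0), (Rle_dec 0 y).
    + destruct (convex_point x 0 y) as [t [Ht E]]; [lra|]. exists t; split; lra.
    + assert (x = 0).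
      { apply Rle_antisym; [assumption|]. apply Rnot_lt_le; intros Hx. nra. }
      exists 0. split; [lra|]. subst x; ring.
    + assert (y = 0).
      { apply Rle_antisym; [|assumption]. apply Rnot_lt_le; intros Hy. nra. }
      exists 1. split; [lra|]. subst y; ring.
    + destruct (convex_point y 0 x) as [t [Ht E]]; [lra|].
      exists (1 - t); split; lra.
Qed.

(* A point of a permutation segment at height h' <> h determines its
   parameter; in particular on the interval line it is the foot (a, h). *)
Lemma perm_param_unique h h' t u : h <> h' ->
  (1 - t) * h + t * h' = (1 - u) * h + u * h' -> t = u.
Proof.
  intros Hh E. assert (Z : (t - u) * (h' - h) = 0) by lra.
  destruct (Rmult_integral _ _ Z); lra.
Qed.

Lemma meet_ival_ival h h' l1 r1 l2 r2 : l1 <= r1 -> l2 <= r2 ->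
  (exists p, shape_points h h' (Ival l1 r1) p /\ shape_points h h' (Ival l2 r2) p)
  <-> meets (Ival l1 r1) (Ival l2 r2).
Proof.
  intros W1 W2. simpl. split.
  - intros [p [[_ H1] [_ H2]]]. lra.
  - intros [H1 H2]. exists (Rmax l1 l2, h); simpl.
    unfold Rmax; destruct (Rle_dec l1 l2); lra.
Qed.

Lemma meet_ival_perm h h' l r a b : h <> h' ->
  (exists p, shape_points h h' (Ival l r) p /\ shape_points h h' (Perm a b) p)
  <-> meets (Ival l r) (Perm a b).
Proof.
  intros Hh. simpl. split.
  - intros [p [[E H] [t [Ht [E1 E2]]]]].
    assert (t = 0) by (apply (perm_param_unique h h' t 0); lra). subst t. lra.
  - intros H. exists (a, h); simpl. split; [lra|].
    exists 0. split; [lra|]. split; ring.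
Qed.

Lemma meet_perm_perm h h' a1 b1 a2 b2 : h <> h' ->
  (exists p, shape_points h h' (Perm a1 b1) p /\ shape_points h h' (Perm a2 b2) p)
  <-> meets (Perm a1 b1) (Perm a2 b2).
Proof.
  intros Hh. simpl. rewrite <- zero_between. split.
  - intros [p [[t [Ht [E1 E2]]] [u [Hu [E3 E4]]]]].
    assert (t = u) by (apply (perm_param_unique h h'); lra). subst u.
    exists t. split; [exact Ht | lra].
  - intros [t [Ht E]].
    exists ((1 - t) * a1 + t * b1, (1 - t) * h + t * h'); simpl.
    split; exists t; repeat split; lra.
Qed.

Lemma segments_meet_iff h h' s1 s2 D E : h <> h' ->
  represents h h' s1 D -> represents h h' s2 E ->
  (segs_intersect s1 s2 <-> meets D E).
Proof.
  intros Hh [W1 R1] [W2 R2]. unfold segs_intersect.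
  transitivity (exists p, shape_points h h' D p /\ shape_points h h' E p).
  { split; intros [p [P1 P2]]; exists p;
      split; [apply R1 | apply R2 | apply R1 | apply R2]; assumption. }
  destruct D as [l1 r1 | a1 b1], E as [l2 r2 | a2 b2].
  - apply meet_ival_ival; assumption.
  - apply meet_ival_perm, Hh.
  - rewrite <- (meet_ival_perm h h' l2 r2 a1 b1 Hh). simpl. firstorder.
  - apply meet_perm_perm, Hh.
Qed.

Definition shape_of_segment (h : R) (s : segment) : shape :=
  if Req_EM_T (snd (fst s)) h then
    (if Req_EM_T (snd (snd s)) h
     then Ival (Rmin (fst (fst s)) (fst (snd s))) (Rmax (fst (fst s)) (fst (snd s)))
     else Perm (fst (fst s)) (fst (snd s)))
  else Perm (fst (snd s)) (fst (fst s)).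

Lemma represents_interval h h' x1 x2 :
  represents h h' ((x1, h), (x2, h)) (Ival (Rmin x1 x2) (Rmax x1 x2)).
Proof.
  split; [unfold shape_ok, Rmin, Rmax; destruct (Rle_dec x1 x2); lra|].
  intros [px py]; unfold in_segment; simpl. split.
  - intros [t [Ht [E1 E2]]]. split; [lra|].
    rewrite E1. unfold Rmin, Rmax; destruct (Rle_dec x1 x2); split; nra.
  - intros [E H]. destruct (convex_point_minmax x1 px x2 H) as [t [Ht E']].
    exists t. repeat split; lra.
Qed.

Lemma represents_perm h h' x1 x2 :
  represents h h' ((x1, h), (x2, h')) (Perm x1 x2).
Proof. split; [exact I|]. intros p; unfold in_segment; simpl. tauto. Qed.

Lemma represents_perm_rev h h' x1 x2 :
  represents h h' ((x1, h'), (x2, h)) (Perm x2 x1).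
Proof.
  split; [exact I|]. intros p; unfold in_segment; simpl.
  split; intros [t [Ht [E1 E2]]]; exists (1 - t); repeat split; lra.
Qed.

Lemma shape_of_segment_represents h h' s : h <> h' ->
  interval_seg_on h s \/ permutation_seg h h' s ->
  represents h h' s (shape_of_segment h s).
Proof.
  intros Hh K. destruct s as [[x1 y1] [x2 y2]].
  unfold shape_of_segment, interval_seg_on, permutation_seg, on_hline in *; simpl in *.
  destruct (Req_EM_T y1 h) as [->|E1], (Req_EM_T y2 h) as [->|E2].
  - apply represents_interval.
  - assert (y2 = h') by (destruct K as [[_ K]|[[_ K]|[K _]]]; congruence).
    subst y2. apply represents_perm.
  - assert (y1 = h') by (destruct K as [[K _]|[[K _]|[K _]]]; congruence).
    subst y1. apply represents_perm_rev.
  - exfalso. destruct K as [[K _]|[[K _]|[_ K]]]; contradiction.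
Qed.

Definition left_of (a b : R) (D : shape) : Prop :=
  match D with Ival _ r => r < a | Perm a' b' => a' < a /\ b' < b end.

Definition right_of (a b : R) (D : shape) : Prop :=
  match D with Ival l _ => a < l | Perm a' b' => a < a' /\ b < b' end.

Definition on_side (c : bool) (a b : R) (D : shape) : Prop :=
  if c then left_of a b D else right_of a b D.

Lemma meets_sym D E : meets D E -> meets E D.
Proof. destruct D, E; simpl; intros; lra. Qed.

Lemma apart_from_perm_side a b D :
  ~ meets (Perm a b) D -> left_of a b D \/ right_of a b D.
Proof.
  destruct D as [l r | a' b']; simpl; intros H.
  - lra.
  - destruct (Rlt_or_le a' a), (Rlt_or_le b' b).
    + left; lra.
    + exfalso; apply H; nra.
    + exfalso; apply H; nra.
    + right. destruct (Req_dec a a'); [subst; exfalso; apply H; nra|].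
      destruct (Req_dec b b'); [subst; exfalso; apply H; nra|]. lra.
Qed.

Lemma left_right_apart a b D E : left_of a b D -> right_of a b E -> ~ meets D E.
Proof. destruct D, E; simpl; intros; nra. Qed.

Lemma side_propagates c a b D E :
  on_side c a b D -> meets D E -> ~ meets (Perm a b) E -> on_side c a b E.
Proof.
  intros S M N. destruct (apart_from_perm_side _ _ _ N) as [L | R]; destruct c;
    simpl in *; auto; exfalso.
  - exact (left_right_apart _ _ _ _ L S (meets_sym _ _ M)).
  - exact (left_right_apart _ _ _ _ S R M).
Qed.

Lemma sides_not_mutual c a b a' b' :
  on_side c a b (Perm a' b') -> on_side c a' b' (Perm a b) -> False.
Proof. destruct c; simpl; lra. Qed.

Definition cyc_adj (n i j : nat) : Prop :=
  (j = i + 1 \/ i = j + 1 \/ (i = n - 1 /\ j = 0) \/ (j = n - 1 /\ i = 0))%nat.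

Definition wr (n x : nat) : nat := if Nat.ltb x n then x else (x - n)%nat.

Ltac cyc_arith := unfold wr, cyc_adj in *; repeat match goal with
  | |- context [Nat.ltb ?x ?y] => destruct (Nat.ltb_spec x y)
  | H : context [Nat.ltb ?x ?y] |- _ => destruct (Nat.ltb_spec x y)
  end; lia.

Lemma Gadj_cycle_iff n i j : (i < n)%nat -> (j < n)%nat ->
  (Gadj n (Vv i) (Vv j) <-> cyc_adj n i j).
Proof.
  intros Hi Hj. simpl.
  assert (Succ : forall k, (k < n)%nat -> ((k + 1) mod n = wr n (k + 1))%nat).
  { intros k Hk. unfold wr. destruct (Nat.ltb_spec (k + 1) n).
    - apply Nat.mod_small; lia.
    - replace (k + 1)%nat with n by lia. rewrite Nat.Div0.mod_same. lia. }
  rewrite (Succ i Hi), (Succ j Hj). split; intros; cyc_arith.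
Qed.

(* [far n x y]: y lies in the component of G_n - N[x] that contains the bulk
   of the cycle (all of it except x's closed neighbourhood on the cycle). *)
Definition far (n : nat) (x y : Gvtx) : Prop :=
  match x, y with
  | Vv k, (Vv j | Wv j | Zv j) => j <> k /\ ~ cyc_adj n k j
  | Wv i, (Vv j | Wv j | Zv j) => j <> i
  | Zv _, Vv _ => True
  | Zv i, (Wv j | Zv j) => j <> i
  end.

Lemma far_not_adjacent n x y : Gvalid n x -> Gvalid n y -> far n x y ->
  x <> y /\ ~ Gadj n x y.
Proof.
  destruct x as [k|i|i], y as [j|j|j]; intros Vx Vy F; simpl in Vx, Vy, F;
    try rewrite Gadj_cycle_iff by assumption; simpl; unfold cyc_adj in *;
    (split; [intros E; inversion E; subst; lia | lia]).
Qed.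

Lemma far_w_far_v n x j : far n x (Wv j) -> far n x (Vv j).
Proof. destruct x; simpl; tauto. Qed.

Lemma far_z_far_w n x j : far n x (Zv j) -> far n x (Wv j).
Proof. destruct x; simpl; tauto. Qed.

Lemma pendants_far n x y i j : (x = Wv i \/ x = Zv i) -> (y = Wv j \/ y = Zv j) ->
  i <> j -> far n x y.
Proof. intros [-> | ->] [-> | ->] N; simpl; auto. Qed.

Lemma far_cycle_arc n x : (7 <= n)%nat -> Gvalid n x ->
  exists s L, (s + L < 2 * n)%nat /\
    (forall m, (m <= L)%nat -> far n x (Vv (wr n (s + m)))) /\
    (forall j, (j < n)%nat -> far n x (Vv j) -> exists m, (m <= L)%nat /\ wr n (s + m) = j).
Proof.
  intros Hn. destruct x as [k|i|i]; simpl; intros Hx.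
  - exists (k + 2)%nat, (n - 4)%nat. split; [lia|]. split.
    + intros m Hm. cyc_arith.
    + intros j Hj [F1 F2]. destruct (Nat.leb_spec (k + 2) j);
        [exists (j - (k + 2))%nat | exists (j + n - (k + 2))%nat]; split; cyc_arith.
  - exists (i + 1)%nat, (n - 2)%nat. split; [lia|]. split.
    + intros m Hm. cyc_arith.
    + intros j Hj F. destruct (Nat.leb_spec (i + 1) j);
        [exists (j - (i + 1))%nat | exists (j + n - (i + 1))%nat]; split; cyc_arith.
  - exists 0%nat, (n - 1)%nat. split; [lia|]. split.
    + trivial.
    + intros j Hj _. exists j. split; cyc_arith.
Qed.

Lemma sticking_out_covers_endpoint D lX rX lV rV : shape_ok D -> lX <= rX ->
  meets D (Ival lX rX) -> ~ meets D (Ival lV rV) -> meets (Ival lX rX) (Ival lV rV) ->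
  (lX <= lV <= rX) \/ (lX <= rV <= rX).
Proof. destruct D; simpl; intros; lra. Qed.

Fixpoint count_upto (p : nat -> bool) (m : nat) : nat :=
  match m with O => O | S m' => (count_upto p m' + (if p m' then 1 else 0))%nat end.

Lemma count_complement p m : (count_upto p m + count_upto (fun i => negb (p i)) m)%nat = m.
Proof. induction m; simpl; auto. destruct (p m); simpl; lia. Qed.

(* Extracting the largest index counted: repeated use yields distinct indices. *)
Lemma count_pick p m k : (S k <= count_upto p m)%nat ->
  exists i, (i < m)%nat /\ p i = true /\ (k <= count_upto p i)%nat.
Proof.
  induction m; simpl; intros H; [lia|].
  destruct (p m) eqn:E.
  - exists m. repeat split; auto; lia.
  - destruct IHm as [i [Hi [Pi Ci]]]; [lia|]. exists i; repeat split; auto; lia.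
Qed.

Section ShapeModel.

Variable n : nat.
Hypothesis n_ge7 : (7 <= n)%nat.
Variable d : Gvtx -> shape.
Hypothesis d_model : forall x y, Gvalid n x -> Gvalid n y -> x <> y ->
  (Gadj n x y <-> meets (d x) (d y)).
Hypothesis d_ok : forall x, Gvalid n x -> shape_ok (d x).

Lemma adj_meets x y : Gvalid n x -> Gvalid n y -> x <> y -> Gadj n x y -> meets (d x) (d y).
Proof. intros Vx Vy N A. now apply d_model. Qed.

Lemma nonadj_apart x y : Gvalid n x -> Gvalid n y -> x <> y -> ~ Gadj n x y ->
  ~ meets (d x) (d y).
Proof. intros Vx Vy N A M. apply A. now apply d_model. Qed.

Lemma far_apart x y : Gvalid n x -> Gvalid n y -> far n x y -> ~ meets (d x) (d y).
Proof.
  intros Vx Vy F. destruct (far_not_adjacent n x y Vx Vy F).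
  now apply nonadj_apart.
Qed.

Lemma cyc_meets i j : (i < n)%nat -> (j < n)%nat -> cyc_adj n i j ->
  meets (d (Vv i)) (d (Vv j)).
Proof.
  intros Hi Hj C. apply adj_meets; auto; [intros E; inversion E; cyc_arith|].
  now apply Gadj_cycle_iff.
Qed.

Lemma noncyc_apart i j : (i < n)%nat -> (j < n)%nat -> i <> j -> ~ cyc_adj n i j ->
  ~ meets (d (Vv i)) (d (Vv j)).
Proof.
  intros Hi Hj N C. apply nonadj_apart; auto; [congruence|].
  now rewrite Gadj_cycle_iff.
Qed.

Definition side_type (x : Gvtx) (c : bool) : Prop :=
  exists a b, d x = Perm a b /\ forall y, Gvalid n y -> far n x y -> on_side c a b (d y).

Lemma side_type_clash x y c : side_type x c -> side_type y c ->
  Gvalid n x -> Gvalid n y -> far n x y -> far n y x -> False.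
Proof.
  intros [a [b [Ex Hx]]] [a' [b' [Ey Hy]]] Vx Vy Fxy Fyx.
  specialize (Hx y Vy Fxy). specialize (Hy x Vx Fyx). rewrite Ey in Hx. rewrite Ex in Hy.
  exact (sides_not_mutual _ _ _ _ _ Hx Hy).
Qed.

(* The far arc of the cycle, being connected and missing x, lies on one side. *)
Lemma side_along_arc x a b s L : Gvalid n x -> d x = Perm a b -> (s + L < 2 * n)%nat ->
  (forall m, (m <= L)%nat -> far n x (Vv (wr n (s + m)))) ->
  exists c, forall m, (m <= L)%nat -> on_side c a b (d (Vv (wr n (s + m)))).
Proof.
  intros Vx Ex HL Hfar.
  assert (Hapart : forall m, (m <= L)%nat -> ~ meets (Perm a b) (d (Vv (wr n (s + m))))).
  { intros m Hm. rewrite <- Ex. apply far_apart; auto. simpl; cyc_arith. }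
  destruct (apart_from_perm_side a b _ (Hapart 0%nat (Nat.le_0_l _))) as [H0 | H0];
    [exists true | exists false]; intros m; induction m as [|m IH]; intros Hm;
    try exact H0; (apply side_propagates with (d (Vv (wr n (s + m))));
    [apply IH; lia | apply cyc_meets; cyc_arith | apply Hapart; lia]).
Qed.

Lemma perm_vertex_side x a b : Gvalid n x -> d x = Perm a b -> exists c, side_type x c.
Proof.
  intros Vx Ex.
  destruct (far_cycle_arc n x n_ge7 Vx) as (s & L & HL & Harc & Hcover).
  destruct (side_along_arc x a b s L Vx Ex HL Harc) as [c Hc].
  assert (Hv : forall j, (j < n)%nat -> far n x (Vv j) -> on_side c a b (d (Vv j))).
  { intros j Hj F. destruct (Hcover j Hj F) as (m & Hm & <-). exact (Hc m Hm). }
  assert (Hw : forall j, (j < n)%nat -> far n x (Wv j) -> on_side c a b (d (Wv j))).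
  { intros j Hj F. apply side_propagates with (d (Vv j)).
    - exact (Hv j Hj (far_w_far_v n x j F)).
    - apply adj_meets; simpl; auto; discriminate.
    - rewrite <- Ex. now apply far_apart. }
  exists c, a, b. split; [exact Ex|].
  intros [j|j|j] Vy F; simpl in Vy.
  - exact (Hv j Vy F).
  - exact (Hw j Vy F).
  - apply side_propagates with (d (Wv j)).
    + exact (Hw j Vy (far_z_far_w n x j F)).
    + apply adj_meets; simpl; auto; discriminate.
    + rewrite <- Ex. now apply far_apart.
Qed.

(* Two permutation cycle vertices with the same side type are cycle-adjacent,
   since otherwise they would be mutually far. *)
Lemma cyc_same_side_adjacent i j c : (i < n)%nat -> (j < n)%nat -> i <> j ->
  side_type (Vv i) c -> side_type (Vv j) c -> cyc_adj n i j.
Proof.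
  intros Hi Hj N Ti Tj.
  assert (Dec : cyc_adj n i j \/ ~ cyc_adj n i j) by (unfold cyc_adj; lia).
  destruct Dec as [C | C]; auto. exfalso. apply (side_type_clash (Vv i) (Vv j) c); auto; simpl; unfold cyc_adj in *; lia.
Qed.

(* No three cycle vertices share a side type: they would form a triangle in
   the cycle. *)
Lemma no_three_cycle_same_side i j k c : (i < n)%nat -> (j < n)%nat -> (k < n)%nat ->
  i <> j -> j <> k -> i <> k ->
  side_type (Vv i) c -> side_type (Vv j) c -> side_type (Vv k) c -> False.
Proof.
  intros Hi Hj Hk Nij Njk Nik Ti Tj Tk.
  pose proof (cyc_same_side_adjacent i j c Hi Hj Nij Ti Tj).
  pose proof (cyc_same_side_adjacent j k c Hj Hk Njk Tj Tk).
  pose proof (cyc_same_side_adjacent i k c Hi Hk Nik Ti Tk).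
  unfold cyc_adj in *; lia.
Qed.

Lemma perm_cycle_vertex_side i : (i < n)%nat -> is_perm (d (Vv i)) = true ->
  exists c, side_type (Vv i) c.
Proof.
  intros Hi P. destruct (d (Vv i)) as [|a b] eqn:E; [discriminate|].
  exact (perm_vertex_side (Vv i) a b Hi E).
Qed.

(* Among five permutation cycle vertices three share a side: impossible. *)
Lemma no_five_perm_cycle_vertices i1 i2 i3 i4 i5 :
  (i5 < i4 < i3)%nat -> (i3 < i2 < i1)%nat -> (i1 < n)%nat ->
  is_perm (d (Vv i1)) = true -> is_perm (d (Vv i2)) = true -> is_perm (d (Vv i3)) = true ->
  is_perm (d (Vv i4)) = true -> is_perm (d (Vv i5)) = true -> False.
Proof.
  intros H543 H321 H1 P1 P2 P3 P4 P5.
  destruct (perm_cycle_vertex_side i1 ltac:(lia) P1) as [c1 T1].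
  destruct (perm_cycle_vertex_side i2 ltac:(lia) P2) as [c2 T2].
  destruct (perm_cycle_vertex_side i3 ltac:(lia) P3) as [c3 T3].
  destruct (perm_cycle_vertex_side i4 ltac:(lia) P4) as [c4 T4].
  destruct (perm_cycle_vertex_side i5 ltac:(lia) P5) as [c5 T5].
  destruct c1, c2, c3, c4, c5;
  match goal with
  | A : side_type (Vv ?i) ?c, B : side_type (Vv ?j) ?c, C : side_type (Vv ?k) ?c |- _ =>
      apply (no_three_cycle_same_side i j k c); [lia | lia | lia | lia | lia | lia | exact A | exact B | exact C]
  end.
Qed.

Definition pendant_perm (j : nat) : bool := is_perm (d (Wv j)) || is_perm (d (Zv j)).

Lemma pendant_side j : (j < n)%nat -> pendant_perm j = true ->
  exists x c, (x = Wv j \/ x = Zv j) /\ side_type x c.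
Proof.
  intros Hj P. unfold pendant_perm in P. apply Bool.orb_true_iff in P.
  destruct P as [P | P].
  - destruct (d (Wv j)) as [|a b] eqn:E; [discriminate|].
    destruct (perm_vertex_side (Wv j) a b Hj E) as [c T]. exists (Wv j), c; auto.
  - destruct (d (Zv j)) as [|a b] eqn:E; [discriminate|].
    destruct (perm_vertex_side (Zv j) a b Hj E) as [c T]. exists (Zv j), c; auto.
Qed.

Lemma pendant_valid x j : (x = Wv j \/ x = Zv j) -> (j < n)%nat -> Gvalid n x.
Proof. intros [-> | ->]; simpl; auto. Qed.

(* Three pendant permutation segments at distinct indices: two share a side. *)
Lemma no_three_pendant_perms i j k : (i < n)%nat -> (j < n)%nat -> (k < n)%nat ->
  i <> j -> j <> k -> i <> k ->
  pendant_perm i = true -> pendant_perm j = true -> pendant_perm k = true -> False.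
Proof.
  intros Hi Hj Hk Nij Njk Nik Pi Pj Pk.
  destruct (pendant_side i Hi Pi) as (x & c1 & X & T1).
  destruct (pendant_side j Hj Pj) as (y & c2 & Y & T2).
  destruct (pendant_side k Hk Pk) as (z & c3 & Z & T3).
  pose proof (pendant_valid x i X Hi). pose proof (pendant_valid y j Y Hj).
  pose proof (pendant_valid z k Z Hk).
  destruct c1, c2, c3;
  first
    [ apply (side_type_clash x y _ T1 T2)
    | apply (side_type_clash x z _ T1 T3)
    | apply (side_type_clash y z _ T2 T3) ];
  auto; (eapply pendants_far; [eassumption | eassumption | congruence]).
Qed.

(* Three consecutive interval cycle vertices force a permutation segment on
   the middle pendant path: otherwise the intervals of v_{i-1}, v_{i+1} and
   w_i would be pairwise disjoint, each meeting v_i and sticking out of it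
   (towards v_{i-2}, v_{i+2}, z_i), hence two would cover the same endpoint. *)
Lemma interval_triple_forces_pendant i lA rA lV rV lB rB : (i < n)%nat ->
  d (Vv (wr n (i + n - 1))) = Ival lA rA -> d (Vv i) = Ival lV rV ->
  d (Vv (wr n (i + 1))) = Ival lB rB -> pendant_perm i = true.
Proof.
  intros Hi EA EV EB. unfold pendant_perm.
  destruct (d (Wv i)) as [lW rW | a b] eqn:EW; [exfalso | reflexivity].
  set (p := wr n (i + n - 1)) in *. set (q := wr n (i + 1)) in *.
  set (pp := wr n (i + n - 2)). set (qq := wr n (i + 2)).
  assert (Hp : (p < n)%nat) by (unfold p; cyc_arith).
  assert (Hq : (q < n)%nat) by (unfold q; cyc_arith).
  assert (Hpp : (pp < n)%nat) by (unfold pp; cyc_arith).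
  assert (Hqq : (qq < n)%nat) by (unfold qq; cyc_arith).
  pose proof (d_ok (Vv p) Hp) as OA. pose proof (d_ok (Vv q) Hq) as OB.
  pose proof (d_ok (Wv i) Hi) as OW. rewrite EA in OA. rewrite EB in OB. rewrite EW in OW.
  pose proof (cyc_meets p i Hp Hi ltac:(unfold p; cyc_arith)) as MAV.
  pose proof (cyc_meets q i Hq Hi ltac:(unfold q; cyc_arith)) as MBV.
  pose proof (adj_meets (Wv i) (Vv i) Hi Hi ltac:(discriminate) eq_refl) as MWV.
  pose proof (noncyc_apart p q Hp Hq ltac:(unfold p, q; cyc_arith)
    ltac:(unfold p, q; cyc_arith)) as NAB.
  pose proof (nonadj_apart (Vv p) (Wv i) Hp Hi ltac:(discriminate)
    ltac:(simpl; unfold p; cyc_arith)) as NAW.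
  pose proof (nonadj_apart (Vv q) (Wv i) Hq Hi ltac:(discriminate)
    ltac:(simpl; unfold q; cyc_arith)) as NBW.
  pose proof (cyc_meets pp p Hpp Hp ltac:(unfold pp, p; cyc_arith)) as MCA.
  pose proof (noncyc_apart pp i Hpp Hi ltac:(unfold pp; cyc_arith)
    ltac:(unfold pp; cyc_arith)) as NCV.
  pose proof (cyc_meets qq q Hqq Hq ltac:(unfold qq, q; cyc_arith)) as MEB.
  pose proof (noncyc_apart qq i Hqq Hi ltac:(unfold qq; cyc_arith)
    ltac:(unfold qq; cyc_arith)) as NEV.
  pose proof (adj_meets (Zv i) (Wv i) Hi Hi ltac:(discriminate) eq_refl) as MZW.
  pose proof (nonadj_apart (Zv i) (Vv i) Hi Hi ltac:(discriminate) (fun F => F)) as NZV.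
  rewrite EA, EV in MAV. rewrite EB, EV in MBV. rewrite EW, EV in MWV.
  rewrite EA, EB in NAB. rewrite EA, EW in NAW. rewrite EB, EW in NBW.
  rewrite EA in MCA. rewrite EV in NCV. rewrite EB in MEB. rewrite EV in NEV.
  rewrite EW in MZW. rewrite EV in NZV.
  pose proof (sticking_out_covers_endpoint _ _ _ _ _ (d_ok (Vv pp) Hpp) OA MCA NCV MAV).
  pose proof (sticking_out_covers_endpoint _ _ _ _ _ (d_ok (Vv qq) Hqq) OB MEB NEV MBV).
  pose proof (sticking_out_covers_endpoint _ _ _ _ _ (d_ok (Zv i) Hi) OW MZW NZV MWV).
  simpl in NAB, NAW, NBW. lra.
Qed.

(* A permutation cycle vertex next to an interval cycle vertex has a
   permutation w: an interval w_j would share the foot of v_j with v_i. *)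
Lemma perm_beside_interval i j a b l r : (i < n)%nat -> (j < n)%nat -> cyc_adj n i j ->
  d (Vv j) = Perm a b -> d (Vv i) = Ival l r -> pendant_perm j = true.
Proof.
  intros Hi Hj C EJ EI. unfold pendant_perm.
  destruct (d (Wv j)) as [lW rW | a' b'] eqn:EW; [exfalso | reflexivity].
  pose proof (cyc_meets i j Hi Hj C) as MIJ.
  pose proof (adj_meets (Vv j) (Wv j) Hj Hj ltac:(discriminate) eq_refl) as MJW.
  pose proof (nonadj_apart (Vv i) (Wv j) Hi Hj ltac:(discriminate)
    ltac:(simpl; cyc_arith)) as NIW.
  rewrite EI, EJ in MIJ. rewrite EJ, EW in MJW. rewrite EI, EW in NIW.
  simpl in *. lra.
Qed.

(* Likewise a permutation cycle vertex cannot have two interval cycle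
   neighbours: both would contain its foot. *)
Lemma perm_not_between_intervals j a b i1 l1 r1 i2 l2 r2 :
  (j < n)%nat -> (i1 < n)%nat -> (i2 < n)%nat -> i1 <> i2 ->
  cyc_adj n i1 j -> cyc_adj n i2 j ->
  d (Vv j) = Perm a b -> d (Vv i1) = Ival l1 r1 -> d (Vv i2) = Ival l2 r2 -> False.
Proof.
  intros Hj H1 H2 N C1 C2 EJ E1 E2.
  pose proof (cyc_meets i1 j H1 Hj C1) as M1.
  pose proof (cyc_meets i2 j H2 Hj C2) as M2.
  pose proof (noncyc_apart i1 i2 H1 H2 N ltac:(cyc_arith)) as N12.
  rewrite E1, EJ in M1. rewrite E2, EJ in M2. rewrite E1, E2 in N12.
  simpl in *. lra.
Qed.

(* The index charged to an interval cycle vertex v_i: i itself, or a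
   permutation cycle neighbour of i. *)
Definition witness (i j : nat) : Prop :=
  j = i \/ (is_perm (d (Vv j)) = true /\ cyc_adj n i j).

Lemma interval_has_witness i : (i < n)%nat -> is_perm (d (Vv i)) = false ->
  exists j, (j < n)%nat /\ pendant_perm j = true /\ witness i j.
Proof.
  intros Hi P. destruct (d (Vv i)) as [lV rV | ] eqn:EV; [|discriminate].
  set (p := wr n (i + n - 1)). set (q := wr n (i + 1)).
  destruct (d (Vv q)) as [lB rB | aB bB] eqn:EB.
  - destruct (d (Vv p)) as [lA rA | aA bA] eqn:EA.
    + exists i. split; [exact Hi|]. split; [|left; reflexivity].
      exact (interval_triple_forces_pendant i lA rA lV rV lB rB Hi EA EV EB).
    + exists p. split; [unfold p; cyc_arith|]. split.
      * apply (perm_beside_interval i p aA bA lV rV); auto; unfold p; cyc_arith.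
      * right. rewrite EA. split; [reflexivity | unfold p; cyc_arith].
  - exists q. split; [unfold q; cyc_arith|]. split.
    + apply (perm_beside_interval i q aB bB lV rV); auto; unfold q; cyc_arith.
    + right. rewrite EB. split; [reflexivity | unfold q; cyc_arith].
Qed.

Lemma witness_injective i1 i2 j : (i1 < n)%nat -> (i2 < n)%nat -> (j < n)%nat ->
  is_perm (d (Vv i1)) = false -> is_perm (d (Vv i2)) = false ->
  witness i1 j -> witness i2 j -> i1 = i2.
Proof.
  intros H1 H2 Hj P1 P2 [-> | [Q1 C1]] [E2 | [Q2 C2]]; auto; try congruence.
  destruct (Nat.eq_dec i1 i2) as [|N]; [assumption | exfalso].
  destruct (d (Vv j)) as [|a b] eqn:EJ; [discriminate|].
  destruct (d (Vv i1)) as [l1 r1|] eqn:E1; [|discriminate].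
  destruct (d (Vv i2)) as [l2 r2|] eqn:E2; [|discriminate].
  apply (perm_not_between_intervals j a b i1 l1 r1 i2 l2 r2); auto; cyc_arith.
Qed.

Theorem no_shape_model : False.
Proof.
  set (perm_v := fun i => is_perm (d (Vv i))).
  pose proof (count_complement perm_v n) as Hsplit.
  destruct (Nat.le_gt_cases 5 (count_upto perm_v n)) as [HP | HI].
  - destruct (count_pick _ _ _ HP) as (i1 & H1 & P1 & C1).
    destruct (count_pick _ _ _ C1) as (i2 & H2 & P2 & C2).
    destruct (count_pick _ _ _ C2) as (i3 & H3 & P3 & C3).
    destruct (count_pick _ _ _ C3) as (i4 & H4 & P4 & C4).
    destruct (count_pick _ _ _ C4) as (i5 & H5 & P5 & _).
    exact (no_five_perm_cycle_vertices i1 i2 i3 i4 i5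
      ltac:(lia) ltac:(lia) H1 P1 P2 P3 P4 P5).
  - assert (HI3 : (3 <= count_upto (fun i => negb (perm_v i)) n)%nat) by lia.
    destruct (count_pick _ _ _ HI3) as (i1 & H1 & P1 & C1).
    destruct (count_pick _ _ _ C1) as (i2 & H2 & P2 & C2).
    destruct (count_pick _ _ _ C2) as (i3 & H3 & P3 & _).
    apply Bool.negb_true_iff in P1, P2, P3.
    destruct (interval_has_witness i1 ltac:(lia) P1) as (j1 & J1 & S1 & W1).
    destruct (interval_has_witness i2 ltac:(lia) P2) as (j2 & J2 & S2 & W2).
    destruct (interval_has_witness i3 ltac:(lia) P3) as (j3 & J3 & S3 & W3).
    assert (Distinct : forall ia ib ja jb, (ia < n)%nat -> (ib < n)%nat -> ia <> ib ->
      perm_v ia = false -> perm_v ib = false -> (ja < n)%nat ->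
      witness ia ja -> witness ib jb -> ja <> jb).
    { intros ia ib ja jb Ha Hb N Pa Pb Hja Wa Wb ->.
      exact (N (witness_injective ia ib jb Ha Hb Hja Pa Pb Wa Wb)). }
    apply (no_three_pendant_perms j1 j2 j3); auto;
      [apply (Distinct i1 i2) | apply (Distinct i2 i3) | apply (Distinct i1 i3)]; auto; lia.
Qed.

End ShapeModel.

Lemma shape_model_of_segments n h h' (f : Gvtx -> segment) : h <> h' ->
  (forall x, Gvalid n x -> interval_seg_on h (f x) \/ permutation_seg h h' (f x)) ->
  (forall x y, Gvalid n x -> Gvalid n y -> x <> y ->
     (Gadj n x y <-> segs_intersect (f x) (f y))) ->
  exists d : Gvtx -> shape,
    (forall x y, Gvalid n x -> Gvalid n y -> x <> y -> (Gadj n x y <-> meets (d x) (d y))) /\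
    (forall x, Gvalid n x -> shape_ok (d x)).
Proof.
  intros Hh Hkind Hadj. exists (fun x => shape_of_segment h (f x)).
  assert (Rep : forall x, Gvalid n x -> represents h h' (f x) (shape_of_segment h (f x)))
    by (intros x Vx; apply shape_of_segment_represents; auto).
  split.
  - intros x y Vx Vy N. rewrite (Hadj x y Vx Vy N).
    exact (segments_meet_iff h h' _ _ _ _ Hh (Rep x Vx) (Rep y Vy)).
  - intros x Vx. exact (proj1 (Rep x Vx)).
Qed.

Lemma permutation_seg_sym h1 h2 s : permutation_seg h1 h2 s -> permutation_seg h2 h1 s.
Proof. unfold permutation_seg. tauto. Qed.

Theorem mainTheorem8 : forall (n : nat), (7 <= n)%nat ->
  forall h1 h2 : R, h1 <> h2 ->
  ~ IP_SEG_star_graph h1 h2 Gvtx (Gvalid n) (Gadj n).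
Proof.
  intros n Hn h1 h2 Hh [f [Hkind [[h [Hline Hon]] Hadj]]].
  assert (Horient : exists h', h <> h' /\ forall x, Gvalid n x ->
            interval_seg_on h (f x) \/ permutation_seg h h' (f x)).
  { destruct Hline as [-> | ->]; [exists h2 | exists h1]; split; auto;
      intros x Vx; destruct (Hkind x Vx) as [I | P]; auto using permutation_seg_sym. }
  destruct Horient as [h' [Hh' Hk]].
  destruct (shape_model_of_segments n h h' f Hh' Hk Hadj) as [d [Hmodel Hok]].
  exact (no_shape_model n Hn d Hmodel Hok).
Qed.
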